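(* Let $n\ge 3$, $i\ge 0$, $1\le k\le n$, and $x^\Lambda\partial_k\in\mathcal{B}$. Then $x^\Lambda\partial_k\in\mathcal{L}_i\cap\mathcal{B}_k$ if and only if both of the following hold: (a) $n-k\le \mathrm{WD}(x^\Lambda\partial_k)<r_i$; (b) $i=\mathrm{lev}_i(x^\Lambda\partial_k)$.
   Context: Fix an integer $n\ge 3$. A partition is a sequence $\Lambda=(\lambda_j)_{j\ge1}$ of non-negative integers with finite support; $\mathrm{wt}(\Lambda)=\sum_j j\lambda_j$; $\mathrm{Part}(k)$ is the set of partitions with $\lambda_j=0$ for $j>k$. Write $x^\Lambda=\prod_j x_j^{\lambda_j}$, $\deg(x^\Lambda)=\sum_j\lambda_j$. $\mathcal{B}=\{x^\Lambda\partial_k : 1\le k\le n,\ \Lambda\in\mathrm{Part}(k-1)\}$ and $\mathcal{B}_u=\{x^\Lambda\partial_k\in\mathcal{B}: k=u\}$. For an integer $i\ge-1$, let $r_i\in\{1,\dots,n-1\}$ with $i\equiv r_i\pmod{n-1}$ and $h_i=\lfloor (i-1)/(n-1)\rfloor+1$. Define $\mathrm{WD}(x^\Lambda\partial_k)=\mathrm{wt}(\Lambda)-\deg(x^\Lambda)+n-k$ and $\mathrm{lev}_i(x^\Lambda\partial_k)=h_i\,\mathrm{WD}(x^\Lambda\partial_k)+\deg(x^\Lambda)-1$. For $i\ge-1$, $\mathcal{N}_i=\{b\in\mathcal{B}: \mathrm{lev}_j(b)\le j\text{ for some integer } -1\le j\le i\}$, and $\mathcal{L}_i=\mathcal{N}_i\setminus\mathcal{N}_{i-1}$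 for $i\ge0$. *)

From mathcomp Require Import all_boot all_order all_algebra.
Set Implicit Arguments. Unset Strict Implicit. Unset Printing Implicit Defensive.
Import Order.TTheory GRing.Theory Num.Theory.
Local Open Scope ring_scope.

(* A partition Λ = (λ_j)_{j>=1} is a function lam : nat -> nat, where lam j = λ_j
   (lam 0 is unused and required to be 0).  Λ ∈ Part(m) iff λ_j = 0 for j > m. *)
Definition inPart (m : nat) (lam : nat -> nat) : Prop :=
  lam 0%N = 0%N /\ forall j : nat, (m < j)%N -> lam j = 0%N.

(* The basis element x^Λ ∂_k is represented by the pair (lam, k). *)
Definition inB (n : nat) (lam : nat -> nat) (k : nat) : Prop :=
  (1 <= k <= n)%N /\ inPart k.-1 lam.

Definition inBu (n u : nat) (lam : nat -> nat) (k : nat) : Prop :=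
  inB n lam k /\ k = u.

(* For x^Λ ∂_k ∈ B, Λ is supported in {1..k-1}, so these finite sums are
   exactly wt(Λ) = Σ_j j λ_j and deg(x^Λ) = Σ_j λ_j. *)
Definition wt (lam : nat -> nat) (k : nat) : int := (\sum_(j < k) j * lam j)%N%:Z.
Definition deg (lam : nat -> nat) (k : nat) : int := (\sum_(j < k) lam j)%N%:Z.

Definition WD (n : nat) (lam : nat -> nat) (k : nat) : int :=
  wt lam k - deg lam k + n%:Z - k%:Z.

(* h_i = floor((i-1)/(n-1)) + 1 ; divz is floor division for positive divisor *)
Definition h (n : nat) (i : int) : int := ((i - 1) %/ (n%:Z - 1))%Z + 1.
Definition r (n : nat) (i : int) : int := ((i - 1) %% (n%:Z - 1))%Z + 1.

Definition lev (n : nat) (i : int) (lam : nat -> nat) (k : nat) : int :=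
  h n i * WD n lam k + deg lam k - 1.

Definition inN (n : nat) (i : int) (lam : nat -> nat) (k : nat) : Prop :=
  inB n lam k /\ exists j : int, -1 <= j /\ j <= i /\ lev n j lam k <= j.

Definition inL (n : nat) (i : int) (lam : nat -> nat) (k : nat) : Prop :=
  inN n i lam k /\ ~ inN n (i - 1) lam k.

From mathcomp Require Import all_boot all_order all_algebra.
From mathcomp Require Import zify.
Import Order.TTheory GRing.Theory Num.Theory.
Local Open Scope ring_scope.
Set Implicit Arguments. Unset Strict Implicit. Unset Printing Implicit Defensive.

(* Write every level as j = (h_j - 1)(n - 1) + r_j with 1 <= r_j <= n - 1.  Since
   wt >= deg, WD >= n - k >= 0, so lev_j is nondecreasing in j; hence x^Λ ∂_k lies in
   L_i exactly when lev_i <= i while j < lev_j for all -1 <= j < i, and then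
   lev_i = i.  For i > 0 the level j = i - r_i gives WD < r_i; for i = 0,
   h_0 = 0 forces deg = 1, for which WD <= n - 2 < r_0.  Conversely, if
   WD < r_i <= n - 1 then lev_j - j > lev_i - i = 0 for every j < i. *)

Section LevelCoordinates.
Variable n : nat.
Hypothesis n_gt1 : (1 < n)%N.
Local Notation m := (n%:Z - 1).

Let m_gt0 : 0 < m. Proof. lia. Qed.
Let m_neq0 : m != 0. Proof. lia. Qed.

Lemma h_r_decomposition (j : int) : j = (h n j - 1) * m + r n j.
Proof. by rewrite /h /r addrK addrA -divz_eq subrK. Qed.

Lemma r_bounds (j : int) : 1 <= r n j <= m.
Proof.
have := modz_ge0 (j - 1) m_neq0; have := ltz_pmod (j - 1) m_gt0.
by rewrite /r; lia.
Qed.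

Lemma h_of_decomposition (a s : int) : 1 <= s <= m -> h n ((a - 1) * m + s) = a.
Proof.
move=> s_bounds; rewrite /h -addrA divzMDl // divz_small ?addr0 ?subrK //.
by rewrite gtz0_abs //; lia.
Qed.

Lemma h_homo : {homo h n : j1 j2 / j1 <= j2}.
Proof. by move=> j1 j2 j12; rewrite lerD2r lez_pdiv2r ?lerD2r // ltW. Qed.

Lemma h0 : h n 0 = 0.
Proof.
rewrite -[X in h n X](_ : (0 - 1) * m + m = 0); first by apply: h_of_decomposition; lia.
by rewrite sub0r mulN1r addNr.
Qed.

Lemma r0 : r n 0 = m.
Proof. by have := h_r_decomposition 0; rewrite h0 sub0r mulN1r; lia. Qed.

Lemma h_gt0 (j : int) : 0 < j -> 0 < h n j.
Proof. by move=> j_gt0; rewrite /h ltr_pwDr // divz_ge0 //; lia. Qed.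

Lemma h_sub_r (j : int) : h n (j - r n j) = h n j - 1.
Proof.
rewrite {1}[j]h_r_decomposition addrK.
rewrite -[X in h n X](_ : (h n j - 1 - 1) * m + m = _); last by rewrite mulrBl mul1r subrK.
by apply: h_of_decomposition; lia.
Qed.

End LevelCoordinates.

Lemma deg_le_wt (lam : nat -> nat) (k : nat) : lam 0%N = 0%N -> deg lam k <= wt lam k.
Proof.
move=> lam0; rewrite lez_nat; apply: leq_sum => -[[|j] ?] _ /=; first by rewrite lam0.
by rewrite mulSn leq_addr.
Qed.

Lemma wt_le_deg (lam : nat -> nat) (k : nat) : wt lam k <= k.-1%:Z * deg lam k.
Proof.
rewrite -PoszM lez_nat big_distrr /=; apply: leq_sum => j _.
by rewrite leq_mul2r; have := ltn_ord j; lia.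
Qed.

Lemma WD_ge (n k : nat) (lam : nat -> nat) : inB n lam k -> (n - k)%N%:Z <= WD n lam k.
Proof.
move=> [/andP[k_gt0 k_le_n] [lam0 _]]; have := deg_le_wt k lam0.
by rewrite /WD; lia.
Qed.

Lemma WD_le_of_deg1 (n k : nat) (lam : nat -> nat) :
  inB n lam k -> deg lam k = 1 -> WD n lam k <= n%:Z - 2.
Proof.
move=> [/andP[k_gt0 _] _] deg1; have := wt_le_deg lam k.
by rewrite /WD deg1; lia.
Qed.

Section Levels.
Variables (n k : nat) (lam : nat -> nat).
Hypothesis n_gt1 : (1 < n)%N.

Lemma lev_homo :
  0 <= WD n lam k -> {homo (fun j => lev n j lam k) : j1 j2 / j1 <= j2}.
Proof.
by move=> WD_ge0 j1 j2 /(h_homo n_gt1) h12; rewrite /lev !lerD2r ler_wpM2r.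
Qed.

Lemma inLP (i : int) : -1 <= i ->
  inL n i lam k <->
  [/\ inB n lam k, lev n i lam k <= i & forall j, -1 <= j < i -> j < lev n j lam k].
Proof.
move=> i_ge; split.
- move=> [[lamB [j [j_ge [j_le levj]]]] notN].
  have minimal j' : -1 <= j' < i -> j' < lev n j' lam k.
    move=> /andP[j'_ge j'_lt]; rewrite ltNge; apply/negP => levj'.
    by apply: notN; split => //; exists j'; lia.
  split => //; case: (ltrP j i) => [j_lt | i_le_j]; last by have -> : i = j by lia.
  by have := minimal j; lia.
- case=> lamB levi minimal; split; first by split => //; exists i; lia.
  by case=> _ [j [j_ge [j_le levj]]]; have := minimal j; lia.
Qed.

Lemma lev_eq_of_inL (i : int) : 0 <= i -> inL n i lam k -> lev n i lam k = i.
Proof.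
move=> i_ge0 /inLP[|lamB levi minimal]; first lia.
have WD_ge0 : 0 <= WD n lam k by have := WD_ge lamB; lia.
have := @lev_homo WD_ge0 (i - 1) i ltac:(lia); have := minimal (i - 1).
lia.
Qed.

Lemma WD_lt_r_of_inL (i : int) : 0 <= i -> inL n i lam k -> WD n lam k < r n i.
Proof.
move=> i_ge0 iL; have := lev_eq_of_inL i_ge0 iL.
case/inLP: iL => [|lamB _ minimal]; first lia.
have [i_gt0 | i_le0] := ltrP 0 i; last first.
  have -> : i = 0 by lia.
  rewrite /lev h0 // r0 // mul0r add0r => deg1.
  by have := WD_le_of_deg1 lamB; lia.
(* At the level j = i - r_i = (h_i - 1)(n - 1), h drops by one, so lev_j = i - WD. *)
have := minimal (i - r n i); rewrite /lev h_sub_r // mulrBl mul1r.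
have := h_r_decomposition n i; have := r_bounds n_gt1 i.
have : 0 <= (h n i - 1) * (n%:Z - 1) by apply: mulr_ge0; have := h_gt0 n_gt1 i_gt0; lia.
by lia.
Qed.

Lemma lt_lev_of_lt (i j : int) :
  WD n lam k < r n i -> lev n i lam k = i -> j < i -> j < lev n j lam k.
Proof.
move=> WD_lt levi j_lt.
have [h_lt | h_ge] := ltrP (h n j) (h n i); last first.
  have h_eq : h n j = h n i by apply/le_anti; rewrite h_ge h_homo // ltW.
  by rewrite /lev h_eq -/(lev n i lam k) levi.
move: levi WD_lt; rewrite /lev.
have := h_r_decomposition n i; have := h_r_decomposition n j.
have := r_bounds n_gt1 i; have := r_bounds n_gt1 j.
move: (WD n lam k) (h n i) (h n j) h_lt => W hi hj h_lt rj ri dj di levi W_lt.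
(* lev_j - j = (h_i - h_j)(n - 1 - WD) + r_i - r_j and n - 1 - WD >= r_i - WD > 0. *)
have : 0 <= (hi - hj - 1) * (n%:Z - 1 - W) by apply: mulr_ge0; lia.
nia.
Qed.

End Levels.

Theorem theorem2p15 (n : nat) (i : int) (k : nat) (lam : nat -> nat) :
  (3 <= n)%N -> 0 <= i -> (1 <= k <= n)%N -> inB n lam k ->
  (inL n i lam k /\ inBu n k lam k) <->
  ((n - k)%N%:Z <= WD n lam k /\ WD n lam k < r n i /\ i = lev n i lam k).
Proof.
move=> n_ge3 i_ge0 _ lamB; have n_gt1 : (1 < n)%N by apply: ltnW.
rewrite /inBu; split.
- case=> iL _; split; first exact: WD_ge.
  by split; [exact: WD_lt_r_of_inL iL | rewrite lev_eq_of_inL].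
- case=> _ [WD_lt levi]; split=> //.
  apply/inLP => //; first lia.
  split=> //; first by rewrite -levi.
  by move=> j /andP[_ j_lt]; exact: (lt_lev_of_lt n_gt1 WD_lt (esym levi) j_lt).
Qed.
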